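(* Let $X\subseteq\mathbb{C}^n$ be a complex analytic variety with coordinates $z_1,\dots,z_n$, $x\in X$, $M$ an $\mathcal{O}_{X,x}$-submodule of $\mathcal{O}_{X,x}^p$ with matrix of generators $[M]$, and $k\in\mathbb{N}$. Then $(z_{t_1}-z'_{t_1})\cdots(z_{t_k}-z'_{t_k})\det(M_{IJ})\det(M'_{KL})\in I_{2k}(M_D)$ at $(x,x)$ for all $t_1,\dots,t_k\in\{1,\dots,n\}$ and all $k$-indexes $I,J,K,L$.
   Context: $\pi_1,\pi_2:X\times X\to X$ are projections. For an object $A$ on $X$, $A$ also denotes $A\circ\pi_1$ and $A'$ denotes $A\circ\pi_2$; so $z_i-z_i'=z_i\circ\pi_1-z_i\circ\pi_2$. For $k$-indexes $I,J$, $M_{IJ}$ is the $k\times k$ submatrix of $[M]$ with rows $I$ and columns $J$ (composed with $\pi_1$), and $M'_{KL}$ the submatrix with rows $K$, columns $L$ composed with $\pi_2$. $M_D$ is the submodule of $\mathcal{O}_{X\times X,(x,x)}^{2p}$ generated by $h_D=(h\circ\pi_1,h\circ\pi_2)$, $h\in M$, and $I_{2k}(M_D)$ is the ideal of its $2k\times 2k$ minors. *)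

(* Abstract algebraic rendering of the local rings of germs:
   A  plays O_{X,x},  B plays O_{X x X,(x,x)},
   f1, f2 : A -> B are the pullbacks along the projections pi_1, pi_2. *)
From mathcomp Require Import all_boot all_order all_algebra.
Set Implicit Arguments. Unset Strict Implicit. Unset Printing Implicit Defensive.
Import GRing.Theory.
Local Open Scope ring_scope.

Definition kindex (k p : nat) (I : 'I_k -> 'I_p) : Prop :=
  forall a b : 'I_k, (a < b)%N -> (I a < I b)%N.

Definition subM (R : Type) (p m k : nat) (G : 'M[R]_(p, m))
  (I : 'I_k -> 'I_p) (J : 'I_k -> 'I_m) : 'M[R]_k :=
  \matrix_(a < k, b < k) G (I a) (J b).

Definition inM (A : comNzRingType) (p m : nat) (G : 'M[A]_(p, m)) (h : 'cV[A]_p)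
  : Prop := exists c : 'cV[A]_m, h = G *m c.

Definition hD (A B : comNzRingType) (f1 f2 : {rmorphism A -> B}) (p : nat)
  (h : 'cV[A]_p) : 'cV[B]_(p + p) :=
  col_mx (map_mx f1 h) (map_mx f2 h).

(* A 2k x 2k minor of the generating matrix of M_D, whose columns are the
   h_D, h in M: pick 2k generators and a 2k-index of rows. *)
Definition minorMD (A B : comNzRingType) (f1 f2 : {rmorphism A -> B})
  (p m : nat) (G : 'M[A]_(p, m)) (k : nat) (y : B) : Prop :=
  exists (Rw : 'I_(k + k) -> 'I_(p + p)) (H : 'I_(k + k) -> 'cV[A]_p),
    kindex Rw /\ (forall j, inM G (H j)) /\
    y = \det (\matrix_(a < k + k, b < k + k) hD f1 f2 (H b) (Rw a) ord0).

Definition in_I2k (A B : comNzRingType) (f1 f2 : {rmorphism A -> B})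
  (p m : nat) (G : 'M[A]_(p, m)) (k : nat) (y : B) : Prop :=
  exists (N : nat) (r mn : 'I_N -> B),
    (forall i, minorMD f1 f2 G k (mn i)) /\ y = \sum_(i < N) r i * mn i.

(** Take the 2k x 2k minor of M_D with rows I (first copy) and K (second copy)
    and columns the h_D for h the columns J and L of [M].  For w in O_X,
    (w h)_D = w' h_D + (w - w') (h, 0), so by multilinearity of the
    determinant (w - w') det(.., (h, 0), ..) is a combination of two minors of
    M_D.  Doing this for the k columns coming from J, with w = z_{t_i}, leaves
    a block upper triangular matrix with diagonal blocks M_IJ and M'_KL. *)

From mathcomp Require Import all_boot all_order all_algebra.
From mathcomp Require Import ring zify.
Set Implicit Arguments. Unset Strict Implicit. Unset Printing Implicit Defensive.
Import GRing.Theory.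
Local Open Scope ring_scope.

Lemma inM_col (A : comNzRingType) p m (G : 'M[A]_(p, m)) j : inM G (col j G).
Proof. by exists (delta_mx j 0); rewrite colE. Qed.

Lemma inM_scale (A : comNzRingType) p m (G : 'M[A]_(p, m)) c h :
  inM G h -> inM G (c *: h).
Proof. by case=> v ->; exists (c *: v); rewrite scalemxAr. Qed.

Definition colsmx (R : Type) n q (Rw : 'I_n -> 'I_q) (C : 'I_n -> 'cV[R]_q)
  : 'M[R]_n := \matrix_(a, b) C b (Rw a) ord0.

Lemma det_colsmx_linear (R : comNzRingType) n q (Rw : 'I_n -> 'I_q)
    (C C1 C2 : 'I_n -> 'cV[R]_q) j x y :
  C j = x *: C1 j + y *: C2 j ->
  (forall b, b != j -> C1 b = C b) -> (forall b, b != j -> C2 b = C b) ->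
  \det (colsmx Rw C) = x * \det (colsmx Rw C1) + y * \det (colsmx Rw C2).
Proof.
move=> Cj C1E C2E.
rewrite -[LHS]det_tr -(det_tr (colsmx Rw C1)) -(det_tr (colsmx Rw C2)).
apply: (determinant_multilinear (i0 := j)).
- by apply/rowP => a; rewrite !mxE Cj !mxE.
- by apply/matrixP => a b; rewrite !mxE C1E // eq_sym neq_lift.
- by apply/matrixP => a b; rewrite !mxE C2E // eq_sym neq_lift.
Qed.

Definition ord_case k k' T (f : 'I_k -> T) (g : 'I_k' -> T) (a : 'I_(k + k'))
  : T := match split a with inl i => f i | inr i => g i end.

Lemma ord_case_lshift k k' T (f : 'I_k -> T) (g : 'I_k' -> T) i :
  ord_case f g (lshift k' i) = f i.
Proof. by rewrite /ord_case (unsplitK (inl i : 'I_k + 'I_k')). Qed.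

Lemma ord_case_rshift k k' T (f : 'I_k -> T) (g : 'I_k' -> T) i :
  ord_case f g (rshift k i) = g i.
Proof. by rewrite /ord_case (unsplitK (inr i : 'I_k + 'I_k')). Qed.

Lemma kindex_ord_case k k' p p' (I : 'I_k -> 'I_p) (K : 'I_k' -> 'I_p') :
  kindex I -> kindex K ->
  kindex (ord_case (fun i => lshift p' (I i)) (fun i => rshift p (K i))).
Proof.
move=> incI incK a b; rewrite /ord_case.
case: split_ordP => i ->; case: split_ordP => i' -> /=.
- exact: incI.
- by move=> _; have := ltn_ord (I i); lia.
- by have := ltn_ord i'; lia.
- by rewrite !ltn_add2l; apply: incK.
Qed.

Lemma prod_ord_ltnS (R : comNzRingType) k (F : 'I_k -> R) s (lt_sk : (s < k)%N) :
  \prod_(i < k | (i < s.+1)%N) F i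
  = F (Ordinal lt_sk) * \prod_(i < k | (i < s)%N) F i.
Proof.
rewrite (bigD1 (Ordinal lt_sk)) //=; congr (_ * _); apply: eq_bigl => i.
by rewrite ltnS leq_eqVlt -val_eqE /=; case: ltngtP.
Qed.

Section MinorIdeal.
Variables (A B : comNzRingType) (f1 f2 : {rmorphism A -> B}) (p m : nat).
Variables (G : 'M[A]_(p, m)) (k : nat).

Local Notation I2k := (in_I2k f1 f2 G k).

Lemma in_I2k_minor y : minorMD f1 f2 G k y -> I2k y.
Proof.
by move=> My; exists 1%N, (fun=> 1), (fun=> y); rewrite big_ord1 mul1r.
Qed.

Lemma in_I2k_add x y : I2k x -> I2k y -> I2k (x + y).
Proof.
move=> [N1 [r1 [mn1 [M1 ->]]]] [N2 [r2 [mn2 [M2 ->]]]].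
exists (N1 + N2)%N, (ord_case r1 r2), (ord_case mn1 mn2); split.
  by move=> i; rewrite /ord_case; case: split.
by rewrite big_split_ord; congr (_ + _); apply: eq_bigr => i _;
  rewrite ?ord_case_lshift ?ord_case_rshift.
Qed.

Lemma in_I2k_mull c x : I2k x -> I2k (c * x).
Proof.
move=> [N [r [mn [Mmn ->]]]]; exists N, (fun i => c * r i), mn; split => //.
by rewrite mulr_sumr; apply: eq_bigr => i _; rewrite mulrA.
Qed.

Definition hD1 (h : 'cV[A]_p) : 'cV[B]_(p + p) := col_mx (map_mx f1 h) 0.

Lemma hD_scale w h :
  hD f1 f2 (w *: h) = f2 w *: hD f1 f2 h + (f1 w - f2 w) *: hD1 h.
Proof.
rewrite /hD /hD1 !map_mxZ !scale_col_mx add_col_mx scaler0 addr0.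
by rewrite -scalerDl addrC subrK.
Qed.

Variables (Rw : 'I_(k + k) -> 'I_(p + p)) (w : 'I_k -> A).
Hypothesis incRw : kindex Rw.

Definition mixed_cols (s : nat) (H : 'I_(k + k) -> 'cV[A]_p) (b : 'I_(k + k))
  : 'cV[B]_(p + p) :=
  if (b < s)%N then hD1 (H b) else hD f1 f2 (H b).

Lemma in_I2k_mixed_cols s : (s <= k)%N -> forall H, (forall b, inM G (H b)) ->
  I2k (\prod_(i < k | (i < s)%N) (f1 (w i) - f2 (w i))
       * \det (colsmx Rw (mixed_cols s H))).
Proof.
elim: s => [|s IHs] le_sk H MH.
  rewrite big_pred0 // mul1r; apply: in_I2k_minor.
  by exists Rw, H; split; [|split].
set i0 := Ordinal le_sk; set j := lshift k i0.
pose Hw b := if b == j then w i0 *: H b else H b.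
have MHw b : inM G (Hw b) by rewrite /Hw; case: eqP => _; [apply: inM_scale|].
have neq_j b : b != j -> (b < s.+1)%N = (b < s)%N.
  move=> /eqP b_j; rewrite ltnS leq_eqVlt; case: eqP => // bs.
  by case: b_j; apply: val_inj.
have expand : \det (colsmx Rw (mixed_cols s Hw))
    = f2 (w i0) * \det (colsmx Rw (mixed_cols s H))
      + (f1 (w i0) - f2 (w i0)) * \det (colsmx Rw (mixed_cols s.+1 H)).
  apply: (det_colsmx_linear Rw (j := j)).
  - by rewrite /mixed_cols /Hw eqxx /= ltnn ltnSn hD_scale.
  - by move=> b /negbTE b_j; rewrite /mixed_cols /Hw b_j.
  - by move=> b b_j; rewrite /mixed_cols /Hw neq_j // (negbTE b_j).
have := in_I2k_add (IHs (ltnW le_sk) Hw MHw)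
          (in_I2k_mull (- f2 (w i0)) (IHs (ltnW le_sk) H MH)).
by rewrite prod_ord_ltnS expand; congr I2k; ring.
Qed.

End MinorIdeal.

Lemma colsmx_mixed_cols_block (A B : comNzRingType) (f1 f2 : {rmorphism A -> B})
    p m (G : 'M[A]_(p, m)) k (I K : 'I_k -> 'I_p) (J L : 'I_k -> 'I_m) :
  colsmx (ord_case (fun i => lshift p (I i)) (fun i => rshift p (K i)))
         (mixed_cols f1 f2 k (fun b => col (ord_case J L b) G))
  = block_mx (map_mx f1 (subM G I J)) (map_mx f1 (subM G I L))
             0 (map_mx f2 (subM G K L)).
Proof.
apply/matrixP => a b; rewrite mxE /mixed_cols /ord_case.
case: split_ordP => j ->; case: split_ordP => i -> /=.
- by rewrite block_mxEul /hD1 col_mxEu !mxE.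
- by rewrite block_mxEdl /hD1 col_mxEd !mxE.
- by rewrite block_mxEur /hD col_mxEu !mxE.
- by rewrite block_mxEdr /hD col_mxEd !mxE.
Qed.

Theorem lemma3p2 (A B : comNzRingType) (f1 f2 : {rmorphism A -> B})
  (n : nat) (z : 'I_n -> A) (p m : nat) (G : 'M[A]_(p, m)) (k : nat)
  (t : 'I_k -> 'I_n) (I : 'I_k -> 'I_p) (J : 'I_k -> 'I_m)
  (K : 'I_k -> 'I_p) (L : 'I_k -> 'I_m) :
  kindex I -> kindex J -> kindex K -> kindex L ->
  in_I2k f1 f2 G k
    ((\prod_(i < k) (f1 (z (t i)) - f2 (z (t i))))
       * \det (map_mx f1 (subM G I J)) * \det (map_mx f2 (subM G K L))).
Proof.
move=> incI _ incK _.
have := in_I2k_mixed_cols f1 f2 (fun i => z (t i)) (kindex_ord_case incI incK)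
          (leqnn k) (fun b => inM_col G (ord_case J L b)).
rewrite colsmx_mixed_cols_block det_ublock mulrA.
by rewrite (eq_bigl xpredT) => [|i]; last by rewrite ltn_ord.
Qed.
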